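(* Let $g:\Sigma^n\to\Sigma$ be an $n$-quasigroup, write $\Sigma=\{a,b,c,d\}$, and let $k$ be the first canonical parameter of the double-MDS-code $S=\{\bar x\in\Sigma^n:g(\bar x)\in\{a,b\}\}$. (a) If $1<k<n$, then $g$ is reducible. (b) If $k=n$, then $g$ is semilinear.
   Context: Let $\Sigma=\{0,1,2,3\}$, $[n]=\{1,\ldots,n\}$. An $i$-line of $\Sigma^n$ is a set of the four words that agree in all coordinates except the $i$th; a line is an $i$-line for some $i$. An $(n,2)_4$ MDS code is a set meeting every line in exactly one element. A double-code is a set meeting every line in $0$ or $2$ elements; a double-MDS-code is a set meeting every line in exactly $2$ elements; a double-code is complementable if contained in a double-MDS-code, and prime if complementable, nonempty and not partitionable into two or more nonempty double-codes. An $n$-quasigroup is a map $g:\Sigma^n\to\Sigma$ such that, for each $i$ and each fixing of the other arguments, $x_i\mapsto g(\bar x)$ is a bijection of $\Sigma$. $\chi_S$ denotes the characteristic function, $\oplus$ addition mod 2, and for $K=\{i_1<\cdots<i_m\}\subseteq[n]$, $\bar x_K=(x_{i_1},\ldots,x_{i_m})$. Canonical parameters: every double-MDS-code $S\subseteq\Sigma^n$ has a unique representation $\chi_S(\bar x)=\bigoplus_{j=1}^k\chi_{S_j}(\bar x_{K_j})\oplus\sigma_0$ with $k\in[n]$, $\{K_1,\ldots,K_k\}$ a partition of $[n]$ into nonempty sets, $S_j$ prime double-MDS-codes containing $\bar 0$, $\sigma_0\in\{0,1\}$. An $n$-quasigroup $g$ is reducible if there exist $k'$ with $2\le k'\le n-1$,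 a partition $\{L_1,\ldots,L_{k'}\}$ of $[n]$ into nonempty sets, a $k'$-quasigroup $f_0$ and $|L_j|$-quasigroups $f_j$ with $g(\bar x)=f_0(f_1(\bar x_{L_1}),\ldots,f_{k'}(\bar x_{L_{k'}}))$ (i.e. $g$ is a superposition of quasigroups of arity less than $n$). A double-MDS-code $D\subseteq\Sigma^m$ is linear if $\chi_D(y_1,\ldots,y_m)=\chi_1(y_1)\oplus\cdots\oplus\chi_m(y_m)$ for some $\chi_i:\Sigma\to\{0,1\}$; an MDS code is semilinear if contained in a linear double-MDS-code; an $n$-quasigroup $g$ is semilinear if the MDS code $\{(\bar x,g(\bar x)):\bar x\in\Sigma^n\}\subseteq\Sigma^{n+1}$ is semilinear. *)

From mathcomp Require Import all_boot.
Set Implicit Arguments. Unset Strict Implicit. Unset Printing Implicit Defensive.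

(* Sigma = {0,1,2,3} = 'I_4 ; words of Sigma^n *)
Definition word (n : nat) := {ffun 'I_n -> 'I_4}.

Definition line n (x : word n) (i : 'I_n) : {set word n} :=
  [set y : word n | [forall j, (j != i) ==> (y j == x j)]].

Definition MDS_code n (C : {set word n}) : Prop :=
  forall x i, #|line x i :&: C| = 1.
Definition double_code n (C : {set word n}) : Prop :=
  forall x i, #|line x i :&: C| = 0 \/ #|line x i :&: C| = 2.
Definition double_MDS_code n (C : {set word n}) : Prop :=
  forall x i, #|line x i :&: C| = 2.
Definition complementable n (C : {set word n}) : Prop :=
  exists D : {set word n}, double_MDS_code D /\ C \subset D.
Definition prime_code n (C : {set word n}) : Prop :=
  [/\ complementable C, C != set0 &
      ~ exists P : {set {set word n}},
          [/\ partition P C, 2 <= #|P| &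
              forall B, B \in P -> B != set0 /\ double_code B]].

Definition zero_word n : word n := [ffun => ord0].

(* x_K = (x_{i_1},...,x_{i_m}) for K = {i_1 < ... < i_m}
   (enum of a set of ordinals is increasing) *)
Definition restrict n (K : {set 'I_n}) (x : word n) : word #|K| :=
  [ffun j => x (enum_val j)].

Definition set_partition n k (K : 'I_k -> {set 'I_n}) : Prop :=
  [/\ forall j, K j != set0,
      forall j1 j2, j1 != j2 -> [disjoint K j1 & K j2] &
      forall i, exists j, i \in K j].

Definition canonical_rep n k (S : {set word n}) (K : 'I_k -> {set 'I_n})
    (Sj : forall j : 'I_k, {set word #|K j|}) (s0 : bool) : Prop :=
  [/\ 0 < k <= n, set_partition K,
      forall j, [/\ double_MDS_code (Sj j), prime_code (Sj j)
                  & zero_word #|K j| \in Sj j] &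
      forall x, (x \in S) = (\big[addb/false]_(j < k) (restrict (K j) x \in Sj j)) (+) s0].

Definition upd n (x : word n) (i : 'I_n) (v : 'I_4) : word n :=
  [ffun j => if j == i then v else x j].

Definition quasigroup n (g : word n -> 'I_4) : Prop :=
  forall (x : word n) (i : 'I_n), bijective (fun v => g (upd x i v)).

Definition reducible n (g : word n -> 'I_4) : Prop :=
  exists k' : nat, exists L : 'I_k' -> {set 'I_n},
  exists f0 : word k' -> 'I_4,
  exists f : forall j : 'I_k', word #|L j| -> 'I_4,
    [/\ 2 <= k' <= n.-1, set_partition L, quasigroup f0,
        forall j, quasigroup (f j) &
        forall x, g x = f0 [ffun j => f j (restrict (L j) x)]].

Definition linear_double_MDS m (D : {set word m}) : Prop :=
  double_MDS_code D /\
  exists chi : 'I_m -> 'I_4 -> bool,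
    forall y, (y \in D) = \big[addb/false]_(i < m) chi i (y i).

Definition semilinear_code m (C : {set word m}) : Prop :=
  MDS_code C /\ exists D, linear_double_MDS D /\ C \subset D.

Definition ext n (x : word n) (v : 'I_4) : word n.+1 :=
  [ffun i : 'I_n.+1 => if unlift ord_max i is Some j then x j else v].

Definition semilinear n (g : word n -> 'I_4) : Prop :=
  semilinear_code [set ext x (g x) | x : word n].

Arguments canonical_rep {n k} S K Sj s0.

From mathcomp Require Import all_boot zify.
Set Implicit Arguments. Unset Strict Implicit. Unset Printing Implicit Defensive.

(* (a) Let A = K_j be a block with at least two coordinates and D = S_j.  For a fixed
   assignment z of the coordinates outside A, the map u |-> g(u, z) is a quasigroup that
   sends D into one pair of values and its complement into the other pair.  Two words
   on a common line get different values, so along a path inside D, or inside its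
   complement, "has the same value as u" just alternates; both sets are line-connected
   (D because it is prime, its complement by a 4x4 plane argument), hence whether
   g(u, z) = g(u', z) does not depend on z.  So g(x) = f0(g(x_A, 0), x outside A).
   (b) If k = n every block is a single coordinate, so chi_S is a sum of functions of
   one coordinate each; adding the coordinate g(x) gives a linear double-MDS code
   containing the graph of g. *)

Section Lines.
Variable m : nat.
Implicit Types (x y w : word m) (P : {set word m}).

Lemma updE x i v j : upd x i v j = if j == i then v else x j.
Proof. by rewrite ffunE. Qed.

Lemma upd_at x i v : upd x i v i = v.
Proof. by rewrite updE eqxx. Qed.

Lemma upd_id x i : upd x i (x i) = x.
Proof. by apply/ffunP => j; rewrite updE; case: eqP => // ->. Qed.

Lemma upd_upd x i v v' : upd (upd x i v) i v' = upd x i v'.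
Proof. by apply/ffunP => j; rewrite !updE; case: eqP. Qed.

Lemma updC x i j v t : i != j -> upd (upd x i v) j t = upd (upd x j t) i v.
Proof.
move=> ij; apply/ffunP => l; rewrite !updE.
by case: (eqVneq l j) => [->|//]; rewrite eq_sym (negbTE ij).
Qed.

Lemma upd_inj x i : injective (upd x i).
Proof. by move=> v v' /(congr1 (fun y : word m => y i)); rewrite !upd_at. Qed.

Lemma line_sym x y i : (y \in line x i) = (x \in line y i).
Proof.
by rewrite !inE; apply/forallP/forallP => H j; have := H j; rewrite [y j == _]eq_sym.
Qed.

Lemma line_trans x y w i : y \in line x i -> w \in line y i -> w \in line x i.
Proof.
rewrite !inE => /forallP xy /forallP yw; apply/forallP => j.
by apply/implyP => ji; rewrite (eqP (implyP (yw j) ji)) (implyP (xy j) ji).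
Qed.

Lemma line_upd x y i : y \in line x i -> y = upd x i (y i).
Proof.
rewrite inE => /forallP xy; apply/ffunP => j; rewrite updE.
by case: eqP => [-> //|/eqP ji]; apply/eqP/(implyP (xy j)).
Qed.

Lemma upd_in_line x i v : upd x i v \in line x i.
Proof. by rewrite inE; apply/forallP => j; apply/implyP => ji; rewrite updE (negbTE ji). Qed.

Lemma card_line x i P : #|line x i :&: P| = #|[pred v | upd x i v \in P]|.
Proof.
have -> : line x i :&: P = upd x i @: [set v | upd x i v \in P].
  apply/setP => y; rewrite inE; apply/andP/imsetP => [[xy yP]|[v]].
    by exists (y i); rewrite -?line_upd // inE -line_upd.
  by rewrite inE => vP ->; rewrite upd_in_line.
by rewrite card_imset; [apply: eq_card => v; rewrite inE | apply: upd_inj].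
Qed.

Lemma quasigroup_line_neq (q : word m -> 'I_4) x y i :
  quasigroup q -> y \in line x i -> y != x -> q y != q x.
Proof.
move=> qq xy; apply: contraNneq => qxy.
have [_ /can_inj q_inj _] := qq x i.
have yx_i : y i = x i by apply: q_inj; rewrite /= -line_upd // upd_id.
by rewrite (line_upd xy) yx_i upd_id.
Qed.
End Lines.

Lemma sum_upd m (c : 'I_m -> 'I_4 -> bool) (y : word m) i v :
  \big[addb/false]_(l < m) c l (upd y i v l) = c i v (+) \big[addb/false]_(l | l != i) c l (y l).
Proof.
rewrite (bigD1 i) //= upd_at; congr (_ (+) _).
by apply: eq_bigr => l li; rewrite updE (negbTE li).
Qed.

Section TwoElementSets.
Variable T : finType.
Implicit Type P : {pred T}.

Lemma card2_memE P s1 s2 c : #|P| = 2 -> s1 \in P -> s2 \in P -> s1 != s2 ->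
  (c \in P) = (c == s1) || (c == s2).
Proof.
move=> P2 s1P s2P s12.
have card12 : #|[set s1; s2]| = #|P| by rewrite cards2 s12 P2.
have /(subset_cardP card12) <- : [set s1; s2] \subset P by apply/subsetP => z /set2P[] ->.
by rewrite !inE.
Qed.

Lemma card2_other P s : #|P| = 2 -> s \in P -> exists2 t, t \in P & t != s.
Proof.
move=> P2 sP; have /card_gt1P[u [v [uP vP uv]]] : 1 < #|P| by rewrite P2.
by case: (eqVneq u s) => [us|]; [exists v; rewrite // -us eq_sym | exists u].
Qed.

Lemma card2_eq_other P s t c : #|P| = 2 -> s \in P -> t \in P -> c \in P ->
  s != t -> (c == t) = (c != s).
Proof.
move=> P2 sP tP cP st; move: cP; rewrite (card2_memE c P2 sP tP st).
by case: (eqVneq c s) => [->|]; rewrite ?(negbTE st).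
Qed.
End TwoElementSets.

Lemma card2C (P : {pred 'I_4}) : #|P| = 2 -> #|[predC P]| = 2.
Proof. by move=> P2; apply/eqP; rewrite -(eqn_add2l 2) -{1}P2 cardC card_ord. Qed.

Lemma card2_addb (P : pred 'I_4) c : #|P| = 2 -> #|[pred t | P t (+) c]| = 2.
Proof.
case: c => P2; last by apply: etrans P2; apply: eq_card => t; rewrite !inE addbF.
by apply: etrans (card2C P2); apply: eq_card => t; rewrite !inE addbT.
Qed.

Lemma card_set2_addb (a b : 'I_4) e : a != b -> #|[pred c | (c \in [set a; b]) (+) e]| = 2.
Proof.
move=> ab; apply: card2_addb; apply: etrans (_ : #|[set a; b]| = 2); first exact: eq_card.
by rewrite cards2 ab.
Qed.

Lemma exists_fourth (s0 s1 s2 : 'I_4) : exists s3, s3 \notin [set s0; s1; s2].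
Proof.
have /set0Pn[s3] : ~: [set s0; s1; s2] != set0.
  by rewrite -card_gt0; have := cardsC [set s0; s1; s2]; rewrite card_ord setUC cardsU1 cards2; lia.
by rewrite inE; exists s3.
Qed.

(* M is a plane section of a double-MDS code and P a component of its complement. *)
Lemma plane_zero_reach (M P : 'I_4 -> 'I_4 -> bool) s0 s1 t0 p :
  (forall s, #|[pred t | M s t]| = 2) -> (forall t, #|[pred s | M s t]| = 2) ->
  (forall s t s' t', P s t -> ~~ M s' t' -> (s == s') || (t == t') -> P s' t') ->
  M s0 t0 -> M s1 t0 -> P s0 p -> ~~ M s0 p -> exists q, P s1 q.
Proof.
move=> row2 col2 step M00 M10 P0p N0p.
have stepR s t t' : P s t -> ~~ M s t' -> P s t'.
  by move=> Pst N; apply: step Pst N _; rewrite eqxx.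
have stepC s s' t : P s t -> ~~ M s' t -> P s' t.
  by move=> Pst N; apply: step Pst N _; rewrite eqxx orbT.
case: (eqVneq s0 s1) => [<-|s01]; first by exists p.
case: (boolP (M s1 p)) => [M1p|N1p]; last by exists p; apply: stepC P0p N1p.
have s1p : s1 \in [pred s | M s p] by [].
have [s2 M2p s21] := card2_other (col2 p) s1p.
have s20 : s2 != s0 by apply: contraNneq N0p => <-.
have [s3] := exists_fourth s0 s1 s2; rewrite !inE !negb_or => /andP[/andP[s30 s31] s32].
have N3p : ~~ M s3 p.
  have := card2_memE s3 (col2 p) s1p M2p.
  by rewrite eq_sym s21 inE (negbTE s31) (negbTE s32) => ->.
have col_t0 s : s != s0 -> s != s1 -> ~~ M s t0.
  move=> ss0 ss1; have s0t0 : s0 \in [pred s | M s t0] by [].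
  have := card2_memE s (col2 t0) s0t0 M10 s01.
  by rewrite inE (negbTE ss0) (negbTE ss1) => ->.
have t02 : t0 \in [predC [pred t | M s2 t]] by rewrite !inE col_t0.
have [q1 N2q1 q1t0] := card2_other (card2C (row2 s2)) t02; rewrite !inE in N2q1.
have q1p : q1 != p by apply: contraNneq N2q1 => ->.
have N1q1 : ~~ M s1 q1.
  have t01 : t0 \in [pred t | M s1 t] by [].
  have t0p : t0 != p by apply: contraNneq N0p => <-.
  have := card2_memE q1 (row2 s1) t01 M1p t0p.
  by rewrite inE (negbTE q1t0) (negbTE q1p) => ->.
have P3p := stepC _ _ _ P0p N3p.
have P3t0 := stepR _ _ _ P3p (col_t0 _ s30 s31).
have P2t0 := stepC _ _ _ P3t0 (col_t0 _ s20 s21).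
have P2q1 := stepR _ _ _ P2t0 N2q1.
by exists q1; apply: stepC P2q1 N1q1.
Qed.

Lemma partition_setD (T : finType) (C D : {set T}) :
  C \subset D -> C != set0 -> D :\: C != set0 -> partition [set C; D :\: C] D.
Proof.
move=> CD C0 DC0; rewrite -[X in partition _ X](setID D C) (setIidPr CD).
apply: partitionU1 C0 _; last by rewrite disjoints_subset setCD subsetUr.
by rewrite /partition cover1 trivIset1 inE eqxx eq_sym DC0.
Qed.

Section Connectivity.
Variable m : nat.
Implicit Types (x y w : word m) (C D E : {set word m}).

Definition line_adj D : rel (word m) :=
  fun x y => [&& x \in D, y \in D & [exists i, y \in line x i]].

Definition line_connected D := forall x y, x \in D -> y \in D -> connect (line_adj D) x y.

Lemma line_adj_sym D : symmetric (line_adj D).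
Proof.
move=> x y; rewrite /line_adj andbCA; congr [&& _, _ & _].
by apply/existsP/existsP => -[i]; exists i; rewrite line_sym.
Qed.

Lemma line_adjI D x y i : x \in D -> y \in D -> y \in line x i -> line_adj D x y.
Proof. by move=> xD yD xy; rewrite /line_adj xD yD; apply/existsP; exists i. Qed.

Lemma line_adj_csym D : connect_sym (line_adj D).
Proof. exact/sym_connect_sym/line_adj_sym. Qed.

Lemma connect_line_adj_mem D x y : x \in D -> connect (line_adj D) x y -> y \in D.
Proof.
have clD : closed (line_adj D) D by move=> u v /and3P[-> ->].
by move=> xD xy; rewrite -(closed_connect clD xy).
Qed.

Lemma closed_double_code D E : double_MDS_code D -> E \subset D ->
  closed (line_adj D) E -> double_code E.
Proof.
move=> dD ED clE x i; case: (set_0Vmem (line x i :&: E)) => [->|[w]].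
  by left; rewrite cards0.
rewrite inE => /andP[xw wE]; right; apply: etrans (dD x i).
apply: eq_card => z; rewrite !in_setI.
case xz: (z \in line x i) => //=; apply/idP/idP => [zE|zD]; first exact: subsetP ED z zE.
rewrite -(clE w z) //; apply: line_adjI (subsetP ED _ wE) zD _.
by apply: line_trans xz; rewrite line_sym.
Qed.

Lemma prime_code_connected D : double_MDS_code D -> prime_code D -> line_connected D.
Proof.
move=> dD [_ _ noSplit] x y xD yD; apply/idPn => Nxy; apply: noSplit.
pose C := [set w | connect (line_adj D) x w].
have clC : closed (line_adj D) C.
  by move=> u v uv; rewrite !inE; apply: (connect_closed (line_adj_csym D) x uv).
have CD : C \subset D by apply/subsetP => w; rewrite inE; apply: connect_line_adj_mem.
have clDC : closed (line_adj D) (D :\: C).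
  by move=> u v uv; move: (uv) => /and3P[uD vD _]; rewrite !in_setD uD vD (clC u v uv).
have xC : x \in C by rewrite inE connect0.
have yDC : y \in D :\: C by rewrite !inE yD Nxy.
have C_DC : C != D :\: C by apply: contraTneq (xC) => ->; rewrite in_setD xC.
exists [set C; D :\: C]; split.
- by apply: partition_setD CD _ _; apply/set0Pn; [exists x | exists y].
- by rewrite cards2 C_DC.
- move=> B /set2P[] ->; split.
  + by apply/set0Pn; exists x.
  + exact: closed_double_code dD CD clC.
  + by apply/set0Pn; exists y.
  + exact: closed_double_code dD (subsetDl D C) clDC.
Qed.

Lemma double_MDS_line_mem D x i : double_MDS_code D -> exists2 y, y \in line x i & y \in D.
Proof.
move=> dD; have /set0Pn[y] : line x i :&: D != set0 by rewrite -card_gt0 dD.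
by rewrite inE => /andP[]; exists y.
Qed.

Lemma complement_line_transfer D C x x' i j :
  double_MDS_code D -> C \subset ~: D -> closed (line_adj (~: D)) C ->
  x \in D -> x' \in D -> x' \in line x i ->
  (exists2 w, w \in line x j & w \in C) -> exists2 w, w \in line x' j & w \in C.
Proof.
move=> dD CN clC xD x'D xx' [w xw wC].
case: (eqVneq i j) => [eij|ij].
  by exists w => //; apply: line_trans _ xw; rewrite -eij line_sym.
pose phi s t := upd (upd x i s) j t.
have row s t t' : phi s t' \in line (phi s t) j.
  by rewrite /phi -(upd_upd _ j t t') upd_in_line.
have col s s' t : phi s' t \in line (phi s t) i.
  by rewrite /phi !(updC _ _ _ ij) -(upd_upd _ i s s') upd_in_line.
have row2 s : #|[pred t | phi s t \in D]| = 2 by rewrite -card_line.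
have col2 t : #|[pred s | phi s t \in D]| = 2.
  apply: etrans (dD (upd x j t) i); rewrite card_line.
  by apply: eq_card => s; rewrite !inE /phi updC.
have step s t s' t' : phi s t \in C -> phi s' t' \notin D -> (s == s') || (t == t') ->
    phi s' t' \in C.
  move=> Cst Nst' ss'_tt'; rewrite -(clC (phi s t)) //.
  have Nst : phi s t \in ~: D := subsetP CN _ Cst.
  have N' : phi s' t' \in ~: D by rewrite inE.
  case/orP: ss'_tt' => /eqP eq; rewrite -eq in N' *.
    exact: line_adjI Nst N' (row _ _ _).
  exact: line_adjI Nst N' (col _ _ _).
have ex : x = phi (x i) (x j) by rewrite /phi !upd_id.
have ex' : x' = phi (x' i) (x j).
  have xj : x j = upd x i (x' i) j by rewrite updE eq_sym (negbTE ij).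
  by rewrite /phi xj upd_id -line_upd.
have ew : w = phi (x i) (w j) by rewrite /phi upd_id -line_upd.
have M00 : phi (x i) (x j) \in D by rewrite -ex.
have M10 : phi (x' i) (x j) \in D by rewrite -ex'.
have P0p : phi (x i) (w j) \in C by rewrite -ew.
have N0p : phi (x i) (w j) \notin D by rewrite -ew -in_setC (subsetP CN).
have [q Cq] := plane_zero_reach row2 col2 step M00 M10 P0p N0p.
by exists (phi (x' i) q); rewrite // {2}ex' row.
Qed.

Lemma complement_connected D : double_MDS_code D -> line_connected D -> line_connected (~: D).
Proof.
move=> dD cD y y' yN y'N; case: (eqVneq y y') => [<-|yy']; first exact: connect0.
have [j _] : exists j, y j != y' j.
  apply/existsP; apply: contraNT yy' => /existsPn same.
  by apply/eqP/ffunP => l; apply/eqP/negbNE.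
pose C := [set w | connect (line_adj (~: D)) y w].
have clC : closed (line_adj (~: D)) C.
  by move=> u v uv; rewrite !inE; apply: (connect_closed (line_adj_csym _) y uv).
have CN : C \subset ~: D by apply/subsetP => w; rewrite inE; apply: connect_line_adj_mem.
pose meets x := [exists w, (w \in line x j) && (w \in C)].
have meetsP x : reflect (exists2 w, w \in line x j & w \in C) (meets x).
  by apply: (iffP existsP) => -[w]; [case/andP|]; exists w => //; apply/andP.
have clM : closed (line_adj D) meets.
  move=> x x' /and3P[xD x'D /existsP[i xx']].
  have x'x : x \in line x' i by rewrite line_sym.
  by apply/meetsP/meetsP; [apply: complement_line_transfer xx' |
                           apply: complement_line_transfer x'x].
have [x yx xD] := double_MDS_line_mem y j dD.
have [x' y'x' x'D] := double_MDS_line_mem y' j dD.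
have /meetsP[w x'w wC] : x' \in meets.
  rewrite -(closed_connect clM (cD x x' xD x'D)) unfold_in; apply/meetsP.
  by exists y; [rewrite line_sym | rewrite inE connect0].
suff : y' \in C by rewrite inE.
rewrite -(clC w) //.
apply: (line_adjI (i := j) (subsetP CN _ wC) y'N).
by apply: (line_trans (y := x')); rewrite line_sym.
Qed.

Lemma quasigroup_eq_connected W (q q' : word m -> 'I_4) (V V' : {pred 'I_4}) u u' :
  line_connected W -> quasigroup q -> quasigroup q' -> #|V| = 2 -> #|V'| = 2 ->
  (forall w, w \in W -> q w \in V) -> (forall w, w \in W -> q' w \in V') ->
  u \in W -> u' \in W -> (q u == q u') = (q' u == q' u').
Proof.
move=> cW qq qq' V2 V'2 qV qV' uW u'W.
pose agree z := (q u == q z) == (q' u == q' z).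
have clA : closed (line_adj W) agree.
  move=> z z' /and3P[zW z'W /existsP[i zz']]; rewrite !unfold_in.
  case: (eqVneq z' z) => [-> //|z'z].
  have qz : q z != q z' by rewrite eq_sym (quasigroup_line_neq qq zz' z'z).
  have q'z : q' z != q' z' by rewrite eq_sym (quasigroup_line_neq qq' zz' z'z).
  rewrite /agree (card2_eq_other V2 (qV _ zW) (qV _ z'W) (qV _ uW) qz).
  rewrite (card2_eq_other V'2 (qV' _ zW) (qV' _ z'W) (qV' _ uW) q'z).
  by case: (q u == q z); case: (q' u == q' z).
have := closed_connect clA (cW u u' uW u'W).
by rewrite !unfold_in /agree !eqxx => /esym/eqP.
Qed.
End Connectivity.

Section Unrestrict.
Variables (n : nat) (C : {set 'I_n}).

Definition unrestrict (w : word #|C|) : word n :=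
  [ffun i => if insub (index i (enum C)) is Some l then w l else ord0].

Lemma unrestrict_val w l : unrestrict w (enum_val l) = w l.
Proof.
rewrite ffunE.
have -> : index (enum_val l) (enum C) = l.
  by rewrite (enum_val_nth (enum_val l)) index_uniq ?enum_uniq // -cardE.
by rewrite valK.
Qed.

Lemma unrestrict_out w i : i \notin C -> unrestrict w i = ord0.
Proof. by move=> iC; rewrite ffunE insubF // memNindex ?mem_enum // -cardE ltnn. Qed.

Lemma restrict_unrestrict w : restrict C (unrestrict w) = w.
Proof. by apply/ffunP => l; rewrite ffunE unrestrict_val. Qed.

Lemma unrestrict_restrict x i : i \in C -> unrestrict (restrict C x) i = x i.
Proof. by move=> iC; rewrite -(enum_rankK_in iC iC) unrestrict_val ffunE. Qed.

Lemma unrestrict_upd w l v : unrestrict (upd w l v) = upd (unrestrict w) (enum_val l) v.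
Proof.
apply/ffunP => i; rewrite [RHS]updE; case: (boolP (i \in C)) => [iC|iC].
  by rewrite -(enum_rankK_in iC iC) !unrestrict_val updE (inj_eq enum_val_inj).
have -> : (i == enum_val l) = false by apply: contraNF iC => /eqP ->; apply: enum_valP.
by rewrite !unrestrict_out.
Qed.
End Unrestrict.

Section Reduction.
Variables (n : nat) (g : word n -> 'I_4) (a b : 'I_4).
Variables (A : {set 'I_n}) (D : {set word #|A|}) (beta : word n -> bool).
Hypothesis g_quasi : quasigroup g.
Hypothesis ab : a != b.
Hypothesis D_dMDS : double_MDS_code D.
Hypothesis D_prime : prime_code D.
Hypothesis beta_out : forall x y : word n, (forall i, i \notin A -> x i = y i) -> beta x = beta y.
Hypothesis g_level : forall x : word n, (g x \in [set a; b]) = (restrict A x \in D) (+) beta x.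

Implicit Types (x y X z : word n).

Definition merge X z : word n := [ffun i => if i \in A then X i else z i].

Lemma restrict_merge X z : restrict A (merge X z) = restrict A X.
Proof. by apply/ffunP => l; rewrite !ffunE enum_valP. Qed.

Lemma merge_upd X z i v : i \in A -> merge (upd X i v) z = upd (merge X z) i v.
Proof. by move=> iA; apply/ffunP => j; rewrite !ffunE; case: eqP => [->|]; rewrite ?iA. Qed.

Lemma merge_updr X z i v : i \notin A -> merge X (upd z i v) = upd (merge X z) i v.
Proof.
by move=> iA; apply/ffunP => j; rewrite !ffunE; case: eqP => [->|]; rewrite ?(negbTE iA).
Qed.

Lemma merge_id x : merge x x = x.
Proof. by apply/ffunP => j; rewrite !ffunE if_same. Qed.

Lemma eq_merge X X' z z' : {in A, X =1 X'} -> (forall i, i \notin A -> z i = z' i) ->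
  merge X z = merge X' z'.
Proof. by move=> XX' zz'; apply/ffunP => i; rewrite !ffunE; case: ifPn => [/XX'|/zz']. Qed.

Lemma merge_level X z : (g (merge X z) \in [set a; b]) = (restrict A X \in D) (+) beta z.
Proof.
rewrite g_level restrict_merge; congr (_ (+) _); apply: beta_out => i iA.
by rewrite ffunE (negbTE iA).
Qed.

Definition level (e : bool) : {pred 'I_4} := [pred c | (c \in [set a; b]) (+) e].

Lemma card_level e : #|level e| = 2.
Proof. exact: card_set2_addb. Qed.

Definition fibre z (u : word #|A|) : 'I_4 := g (merge (unrestrict u) z).

Lemma fibre_quasi z : quasigroup (fibre z).
Proof.
move=> u l; apply: (eq_bij (g_quasi (merge (unrestrict u) z) (enum_val l))) => v.
by rewrite /fibre unrestrict_upd merge_upd ?enum_valP.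
Qed.

Lemma fibre_level z u : fibre z u \in level (beta z (+) (u \notin D)).
Proof.
by rewrite inE /fibre merge_level restrict_unrestrict; case: (u \in D); case: (beta z).
Qed.

Lemma fibre_eq z z' u u' :
  (fibre z u == fibre z u') = (fibre z' u == fibre z' u').
Proof.
have cD := prime_code_connected D_dMDS D_prime.
have cN := complement_connected D_dMDS cD.
have inD z1 w : w \in D -> fibre z1 w \in level (beta z1).
  by move=> wD; have := fibre_level z1 w; rewrite wD addbF.
have inN z1 w : w \in ~: D -> fibre z1 w \in level (~~ beta z1).
  by rewrite inE => wN; have := fibre_level z1 w; rewrite wN addbT.
have qz := fibre_quasi z; have qz' := fibre_quasi z'.
case: (eqVneq (u \in D) (u' \in D)) => [sameD|D_ne]; last first.
  have ne z1 : fibre z1 u != fibre z1 u'.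
    apply: contra_neq D_ne => Eu; have := fibre_level z1 u; have := fibre_level z1 u'.
    rewrite -Eu !inE; case: (_ || _); case: (beta z1); case: (u \in D); by case: (u' \in D).
  by rewrite !(negbTE (ne _)).
case: (boolP (u \in D)) => uD; have u'D := uD; rewrite sameD in u'D.
  exact: quasigroup_eq_connected cD qz qz' (card_level _) (card_level _) (inD z) (inD z') uD u'D.
by apply: quasigroup_eq_connected cN qz qz' (card_level _) (card_level _) (inN z) (inN z') _ _;
  rewrite inE.
Qed.

Lemma merge_eq X X' z z' :
  (g (merge X z) == g (merge X' z)) = (g (merge X z') == g (merge X' z')).
Proof.
have E Y z1 : g (merge Y z1) = fibre z1 (restrict A Y).
  by congr g; apply: eq_merge => // i iA; rewrite unrestrict_restrict.
by rewrite !E (fibre_eq z z').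
Qed.

Hypothesis A_big : 1 < #|A|.
Hypothesis Ac_nonempty : 0 < #|~: A|.

Local Notation zero := (zero_word n).

Definition rep (c : 'I_4) : word n := odflt zero [pick X | g (merge X zero) == c].

Lemma rep_spec c : g (merge (rep c) zero) = c.
Proof.
have [a0 a0A] : exists a0, a0 \in A by apply/set0Pn; rewrite -card_gt0 ltnW.
have [h _ hK] := g_quasi (merge zero zero) a0.
rewrite /rep; case: pickP => [X /eqP //|none].
by have := none (upd zero a0 (h c)); rewrite merge_upd // hK eqxx.
Qed.

Definition blocks (j : 'I_#|~: A|.+1) : {set 'I_n} :=
  if unlift ord0 j is Some l then [set enum_val l] else A.

Definition inner (j : 'I_#|~: A|.+1) (w : word #|blocks j|) : 'I_4 :=
  if unlift ord0 j is Some l then unrestrict w (enum_val l) else g (merge (unrestrict w) zero).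
Arguments inner : clear implicits.

Definition outer_rest (w : word #|~: A|.+1) : word #|~: A| := [ffun l => w (lift ord0 l)].

(* rep c is some word on which g (merge _ zero) takes the value c; by merge_eq the value
   of outer does not depend on that choice. *)
Definition outer (w : word #|~: A|.+1) : 'I_4 :=
  g (merge (rep (w ord0)) (unrestrict (outer_rest w))).

Lemma blocks_partition : set_partition blocks.
Proof.
split.
- move=> j; rewrite /blocks; case: (unliftP ord0 j) => [l _|_].
    by apply/set0Pn; exists (enum_val l); rewrite inE.
  by rewrite -card_gt0 ltnW.
- move=> j j'; rewrite /blocks.
  case: (unliftP ord0 j) => [l ->|->]; case: (unliftP ord0 j') => [l' ->|->].
  + by rewrite (inj_eq lift_inj) => ll'; rewrite disjoints1 in_set1 (inj_eq enum_val_inj).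
  + by move=> _; rewrite disjoints1 -in_setC enum_valP.
  + by move=> _; rewrite disjoint_sym disjoints1 -in_setC enum_valP.
  + by rewrite eqxx.
- move=> i; case: (boolP (i \in A)) => iA; first by exists ord0; rewrite /blocks unlift_none.
  have iAc : i \in ~: A by rewrite inE.
  by exists (lift ord0 (enum_rank_in iAc i)); rewrite /blocks liftK enum_rankK_in ?in_set1.
Qed.

Lemma outer_quasi : quasigroup outer.
Proof.
move=> w j; case: (unliftP ord0 j) => [l ->|->].
  apply: (eq_bij (g_quasi (merge (rep (w ord0)) (unrestrict (outer_rest w))) (enum_val l))) => v.
  rewrite /outer.
  have -> : outer_rest (upd w (lift ord0 l) v) = upd (outer_rest w) l v.
    by apply/ffunP => l'; rewrite !ffunE (inj_eq lift_inj).
  rewrite updE (negbTE (neq_lift _ _)) unrestrict_upd merge_updr //.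
  by rewrite -in_setC enum_valP.
have rest_upd0 v : outer_rest (upd w ord0 v) = outer_rest w.
  by apply/ffunP => l'; rewrite !ffunE eq_sym (negbTE (neq_lift _ _)).
apply: injF_bij => v v'; rewrite /outer !upd_at !rest_upd0.
by move/eqP; rewrite (merge_eq _ _ _ zero) !rep_spec => /eqP.
Qed.

Lemma inner_quasi j : quasigroup (inner j).
Proof.
case: (unliftP ord0 j) => [l ->|->] w i.
  have Eb : blocks (lift ord0 l) = [set enum_val l] by rewrite /blocks liftK.
  have /eqP Ei : enum_val i == enum_val l by rewrite -in_set1 -Eb enum_valP.
  by exists id => v; rewrite /inner liftK unrestrict_upd updE Ei eqxx.
have Eb k : (k \in blocks ord0) = (k \in A) by rewrite /blocks unlift_none.
apply: (eq_bij (g_quasi (merge (unrestrict w) zero) (enum_val i))) => v.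
by rewrite /inner unlift_none unrestrict_upd merge_upd // -Eb enum_valP.
Qed.

Lemma g_factor x : g x = outer [ffun j => inner j (restrict (blocks j) x)].
Proof.
set W := [ffun j => _].
have W0 : W ord0 = g (merge x zero).
  rewrite ffunE /inner unlift_none; congr g; apply: eq_merge => // i iA.
  by rewrite unrestrict_restrict // /blocks unlift_none.
have W_rest : outer_rest W = restrict (~: A) x.
  apply/ffunP => l; rewrite !ffunE /inner liftK unrestrict_restrict //.
  by rewrite /blocks liftK in_set1.
rewrite /outer W0 W_rest.
have -> : merge (rep (g (merge x zero))) (unrestrict (restrict (~: A) x)) =
          merge (rep (g (merge x zero))) x.
  by apply: eq_merge => // i iA; rewrite unrestrict_restrict // inE.
have := merge_eq (rep (g (merge x zero))) x x zero.
by rewrite merge_id rep_spec eqxx => /eqP.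
Qed.

Theorem reducible_of_level : reducible g.
Proof.
exists #|~: A|.+1, blocks, outer, inner; split.
- by have := cardsC A; rewrite card_ord; lia.
- exact: blocks_partition.
- exact: outer_quasi.
- exact: inner_quasi.
- exact: g_factor.
Qed.
End Reduction.

Section Extension.
Variable n : nat.

Definition init (y : word n.+1) : word n := [ffun i => y (lift ord_max i)].

Lemma widen_lift (i : 'I_n) : widen_ord (leqnSn n) i = lift ord_max i.
Proof. by apply: ord_inj; rewrite lift_max. Qed.

Lemma ext_lift (x : word n) v i : ext x v (lift ord_max i) = x i.
Proof. by rewrite ffunE liftK. Qed.

Lemma ext_max (x : word n) v : ext x v ord_max = v.
Proof. by rewrite ffunE unlift_none. Qed.

Lemma init_ext (x : word n) v : init (ext x v) = x.
Proof. by apply/ffunP => i; rewrite ffunE ext_lift. Qed.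

Lemma ext_init (y : word n.+1) : ext (init y) (y ord_max) = y.
Proof. by apply/ffunP => i; rewrite ffunE; case: unliftP => [i' ->|->]; rewrite ?ffunE. Qed.

Lemma init_upd_lift (y : word n.+1) i v : init (upd y (lift ord_max i) v) = upd (init y) i v.
Proof. by apply/ffunP => j; rewrite !ffunE (inj_eq lift_inj). Qed.

Lemma init_upd_max (y : word n.+1) v : init (upd y ord_max v) = init y.
Proof. by apply/ffunP => j; rewrite !ffunE eq_sym (negbTE (neq_lift _ _)). Qed.

Lemma mem_graph (g : word n -> 'I_4) y :
  (y \in [set ext x (g x) | x : word n]) = (y ord_max == g (init y)).
Proof.
apply/imsetP/eqP => [[x _ ->]|E]; first by rewrite ext_max init_ext.
by exists (init y); rewrite // -E ext_init.
Qed.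

Lemma graph_MDS (g : word n -> 'I_4) : quasigroup g -> MDS_code [set ext x (g x) | x : word n].
Proof.
move=> g_quasi y i; rewrite card_line.
case: (unliftP ord_max i) => [i' ->|->].
  have [h gh hg] := g_quasi (init y) i'.
  apply: etrans (card1 (h (y ord_max))); apply: eq_card => t.
  rewrite !inE mem_graph updE eq_sym (negbTE (neq_lift _ _)) init_upd_lift.
  by apply/eqP/eqP => [<-|->]; [rewrite gh | rewrite hg].
apply: etrans (card1 (g (init y))); apply: eq_card => t.
by rewrite !inE mem_graph upd_at init_upd_max.
Qed.
End Extension.

Section Semilinear.
Variables (n : nat) (g : word n -> 'I_4) (a b : 'I_4).
Variables (chi : 'I_n -> 'I_4 -> bool) (s0 : bool).
Hypothesis g_quasi : quasigroup g.
Hypothesis ab : a != b.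
Hypothesis g_level : forall x, (g x \in [set a; b]) = \big[addb/false]_(i < n) chi i (x i) (+) s0.

Lemma card_chi i : #|[pred v | chi i v]| = 2.
Proof.
pose x := zero_word n; pose c := \big[addb/false]_(l | l != i) chi l (x l) (+) s0.
have qx : bijective (fun v => g (upd x i v)) := g_quasi x i.
have lv : #|[pred v | chi i v (+) c]| = 2.
  apply: etrans (_ : #|[set a; b]| = 2); last by rewrite cards2 ab.
  rewrite -(on_card_preimset (onW_bij _ qx)); apply: eq_card => v.
  by rewrite inE [in RHS]inE /= g_level sum_upd addbA.
by apply: etrans (card2_addb c lv); apply: eq_card => v; rewrite !inE addbK.
Qed.

Definition chi_ext (i : 'I_n.+1) (v : 'I_4) : bool :=
  if unlift ord_max i is Some i' then chi i' v else ~~ ((v \in [set a; b]) (+) s0).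

Definition linear_hull : {set word n.+1} :=
  [set y : word n.+1 | \big[addb/false]_(i < n.+1) chi_ext i (y i)].

Lemma card_chi_ext i : #|[pred v | chi_ext i v]| = 2.
Proof.
rewrite /chi_ext; case: (unliftP ord_max i) => [i' _|_]; first exact: card_chi.
apply: etrans (card2_addb true (card_set2_addb s0 ab)).
by apply: eq_card => v; rewrite !inE addbT.
Qed.

Lemma linear_hull_dMDS : double_MDS_code linear_hull.
Proof.
move=> y i; rewrite card_line.
apply: etrans (card2_addb (\big[addb/false]_(l | l != i) chi_ext l (y l)) (card_chi_ext i)).
by apply: eq_card => t; rewrite !inE sum_upd.
Qed.

Lemma graph_sub_hull : [set ext x (g x) | x : word n] \subset linear_hull.
Proof.
apply/subsetP => _ /imsetP[x _ ->]; rewrite inE big_ord_recr /= /chi_ext unlift_none ext_max.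
under eq_bigr => i _ do rewrite widen_lift liftK ext_lift.
by rewrite g_level addbK addbN addbb.
Qed.

Theorem semilinear_of_level : semilinear g.
Proof.
split; first exact: graph_MDS.
exists linear_hull; split; last exact: graph_sub_hull.
by split; [exact: linear_hull_dMDS | exists chi_ext => y; rewrite inE].
Qed.
End Semilinear.

Section Partitions.
Variables (n k : nat) (K : 'I_k -> {set 'I_n}).
Hypothesis K_part : set_partition K.

Definition block_of (i : 'I_n) : 'I_k := xchoose (let: And3 _ _ K_cover := K_part in K_cover i).

Lemma mem_block_of i : i \in K (block_of i).
Proof. by rewrite /block_of; case: K_part => _ _ K_cover; exact: (xchooseP (K_cover i)). Qed.

Lemma block_ofE i j : i \in K j -> block_of i = j.
Proof.
move=> iK; apply/eqP; apply: contraT => ne; case: K_part => _ K_disj _.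
by rewrite (disjointFr (K_disj _ _ ne) (mem_block_of i)) in iK.
Qed.

Lemma restrict_out j0 j (x y : word n) : j != j0 ->
  (forall i, i \notin K j0 -> x i = y i) -> restrict (K j) x = restrict (K j) y.
Proof.
move=> jj0 xy; apply/ffunP => l; rewrite !ffunE xy //.
by case: K_part => _ K_disj _; rewrite (disjointFr (K_disj _ _ jj0) (enum_valP l)).
Qed.

Lemma exists_big_block : k < n -> exists j, 1 < #|K j|.
Proof.
move=> kn; case: (boolP [exists j, 1 < #|K j|]) => [/existsP //|/existsPn small].
suff : n <= k by rewrite leqNgt kn.
have block_inj : injective block_of.
  move=> i i' ii'; have /card_le1_eqP K1 : #|K (block_of i)| <= 1 by rewrite leqNgt small.
  by apply: K1; [rewrite ii' | ]; apply: mem_block_of.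
by have := leq_card _ block_inj; rewrite !card_ord.
Qed.

Lemma compl_block_nonempty j : 1 < k -> 0 < #|~: K j|.
Proof.
move=> k1; have [j' j'j] : exists j' : 'I_k, j' != j.
  case: (eqVneq (j : nat) 0) => j0; [exists (Ordinal k1) | exists (Ordinal (ltnW k1))];
    by apply/eqP => /(congr1 (@nat_of_ord k)) /=; lia.
case: K_part => K_ne K_disj _; have /set0Pn[i ij'] := K_ne j'.
by rewrite card_gt0; apply/set0Pn; exists i; rewrite inE (disjointFr (K_disj _ _ j'j) ij').
Qed.
End Partitions.

Section SingletonBlocks.
Variables (n : nat) (K : 'I_n -> {set 'I_n}).
Hypothesis K_part : set_partition K.

Lemma block_of_inj : injective (block_of K_part).
Proof.
have K_ne j : exists i, i \in K j by apply/set0Pn; case: K_part.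
pose r j := xchoose (K_ne j).
have rK : cancel r (block_of K_part) by move=> j; apply: block_ofE; apply: xchooseP.
have [r' rr' r'r] := injF_bij (can_inj rK).
have blE : block_of K_part =1 r' by move=> i; rewrite -{1}(r'r i) rK.
by move=> i i'; rewrite !blE; exact: (can_inj r'r).
Qed.

Lemma restrict_block_of i (x : word n) :
  restrict (K (block_of K_part i)) x = restrict (K (block_of K_part i)) [ffun => x i].
Proof.
apply/ffunP => l; rewrite !ffunE; suff -> : enum_val l = i by [].
by apply: block_of_inj; apply/block_ofE/enum_valP.
Qed.
End SingletonBlocks.

Lemma canonical_rep_reducible n (g : word n -> 'I_4) a b k (K : 'I_k -> {set 'I_n})
    (Sj : forall j : 'I_k, {set word #|K j|}) s0 :
  quasigroup g -> a != b -> canonical_rep [set x : word n | g x \in [set a; b]] K Sj s0 ->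
  1 < k < n -> reducible g.
Proof.
move=> g_quasi ab [_ K_part Sj_prop S_sum] /andP[k1 kn].
have [j0 K_big] := exists_big_block K_part kn.
have [Sj_dMDS Sj_prime _] := Sj_prop j0.
pose beta (x : word n) := \big[addb/false]_(j | j != j0) (restrict (K j) x \in Sj j) (+) s0.
apply: (reducible_of_level (beta := beta) g_quasi ab Sj_dMDS Sj_prime _ _ K_big).
- move=> x y xy; congr (_ (+) _); apply: eq_bigr => j jj0.
  by rewrite (restrict_out K_part jj0 xy).
- by move=> x; have := S_sum x; rewrite inE => ->; rewrite (bigD1 j0) //= addbA.
- exact: compl_block_nonempty K_part j0 k1.
Qed.

Lemma canonical_rep_semilinear n (g : word n -> 'I_4) a b (K : 'I_n -> {set 'I_n})
    (Sj : forall j : 'I_n, {set word #|K j|}) s0 :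
  quasigroup g -> a != b -> canonical_rep [set x : word n | g x \in [set a; b]] K Sj s0 ->
  semilinear g.
Proof.
move=> g_quasi ab [_ K_part _ S_sum].
pose chi i v := restrict (K (block_of K_part i)) [ffun => v] \in Sj (block_of K_part i).
apply: (semilinear_of_level (chi := chi) (s0 := s0) g_quasi ab) => x.
have := S_sum x; rewrite inE => ->; congr (_ (+) _).
rewrite (reindex_inj (@block_of_inj _ _ K_part)); apply: eq_bigr => i _.
by rewrite /chi -restrict_block_of.
Qed.

Theorem corollary6 (n : nat) (g : word n -> 'I_4) (a b : 'I_4) (k : nat)
  (K : 'I_k -> {set 'I_n}) (Sj : forall j : 'I_k, {set word #|K j|}) (s0 : bool) :
  quasigroup g -> a != b ->
  canonical_rep [set x : word n | g x \in [set a; b]] K Sj s0 ->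
  ((1 < k < n)%N -> reducible g) /\ (k = n -> semilinear g).
Proof.
move=> g_quasi ab S_rep; split=> [k_bounds | kn].
  exact: canonical_rep_reducible g_quasi ab S_rep k_bounds.
by subst k; exact: canonical_rep_semilinear g_quasi ab S_rep.
Qed.
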